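(* Let $A$ be a $d\times d$ reclusive matrix and $\vec{c}\in\mathbb{Z}^{d}$. Then $\|A\vec{c}\|_{\infty}\leq 1$ if and only if $\vec{c}=\langle c_{j}\rangle_{j=1}^{d}$ is a weak-alt-1 sequence.
   Context: A $d\times d$ matrix $A=(a_{ij})$ is reclusive if $a_{ij}=0$ for $i>j$, $a_{ii}=1$ for all $i$, and $a_{ij}>a_{ik}>0$ for all $i\le j<k$. A finite sequence $\langle c_i\rangle_{i=1}^n$ is alt-1 if it equals $\langle(-1)^i\rangle_{i=1}^n$ or $\langle(-1)^{i+1}\rangle_{i=1}^n$; it is weak-alt-1 if every term is $-1$, $0$ or $1$ and the subsequence of its nonzero terms is alt-1 (the empty sequence counts as alt-1, so the all-zero sequence is weak-alt-1). *)

From mathcomp Require Import all_boot all_order all_algebra.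
Set Implicit Arguments. Unset Strict Implicit. Unset Printing Implicit Defensive.
Import Order.TTheory GRing.Theory Num.Theory.
Local Open Scope ring_scope.

(* Indices are 0-based: i : 'I_d stands for the paper's index i+1. *)

Definition reclusive (R : realFieldType) (d : nat) (A : 'M[R]_d) : Prop :=
  (forall i j : 'I_d, (j < i)%N -> A i j = 0) /\
  (forall i : 'I_d, A i i = 1) /\
  (forall i j k : 'I_d, (i <= j)%N -> (j < k)%N -> A i k < A i j /\ 0 < A i k).

(* A finite sequence s = <s_1,...,s_n> (stored as a list, s_(i) = nth 0 s (i-1))
   is alt-1 if it equals <(-1)^i> or <(-1)^(i+1)>, i = 1..n. *)
Definition alt1 (s : seq int) : Prop :=
  (forall i : nat, (i < size s)%N -> nth 0 s i = (-1) ^+ i.+1) \/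
  (forall i : nat, (i < size s)%N -> nth 0 s i = (-1) ^+ i.+2).

Definition weak_alt1 (s : seq int) : Prop :=
  (forall x, x \in s -> x \in [:: -1; 0; 1]) /\
  alt1 [seq x <- s | x != 0].

Definition supnorm_le1 (R : realFieldType) (d : nat) (v : 'cV[R]_d) : Prop :=
  forall i : 'I_d, `|v i 0| <= 1.

(* Row i of A c is the sum of the c_j weighted by the entries A_ij, j >= i,
   which are positive, strictly decreasing, and start with A_ii = 1. If a
   weak-alt-1 sequence has first nonzero term l, its weighted sum S satisfies
   0 < l S <= b_0 (b_0 the first weight), by induction: at a nonzero head,
   l S = b_0 - l' S' where the tail starts with l' = -l and 0 < l' S' <= b_1 < b_0.
   So every row of A c has norm at most 1. Conversely, working upwards from the
   last row: if the tail after position i is weak-alt-1 with first nonzero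
   term l, row i equals c_i + S with 0 < l S < 1 (or S = 0 if l = 0), and
   |c_i + S| <= 1 forces the integer c_i into {0, -l} (into {-1, 0, 1} if
   l = 0), which is exactly what it takes to extend the tail by c_i. *)

From mathcomp Require Import all_boot all_order all_algebra.
From mathcomp Require Import zify lra.
Set Implicit Arguments. Unset Strict Implicit. Unset Printing Implicit Defensive.
Import Order.TTheory GRing.Theory Num.Theory.
Local Open Scope ring_scope.

Definition alternates_from (e : int) (s : seq int) : Prop :=
  forall i, (i < size s)%N -> nth 0 s i = e * (-1) ^+ i.

Lemma alternates_from_cons e x t :
  alternates_from e (x :: t) <-> x = e /\ alternates_from (- e) t.
Proof.
split=> [H | [-> H] [|i] /= lt_i].
- split=> [|i lt_i]; first by have := H 0%N erefl; rewrite mulr1.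
  by have /= -> := H i.+1 lt_i; rewrite exprS mulrA mulrN1.
- by rewrite mulr1.
- by rewrite H // exprS mulrA mulrN1.
Qed.

Lemma alt1E s : alt1 s <-> alternates_from (-1) s \/ alternates_from 1 s.
Proof.
have sgn i : (-1 : int) ^+ i.+2 = 1 * (-1) ^+ i.
  by rewrite mul1r !exprS mulrA mulrNN mulr1 mul1r.
by split=> -[H|H]; [left|right|left|right] => i lt_i;
  rewrite ?sgn ?exprS H // ?sgn // -exprS.
Qed.

Lemma alt1_cons x t : alt1 (x :: t) <-> (x = 1 \/ x = -1) /\ alternates_from (- x) t.
Proof.
rewrite alt1E !alternates_from_cons opprK.
by split=> [[[-> ?]|[-> ?]] | [[->|->] ?]]; rewrite ?opprK;
  [split; [right|] | split; [left|] | right | left].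
Qed.

Lemma alternates_from_alt1 e s : (e = 1 \/ e = -1) ->
  alternates_from e s <-> alt1 s /\ (s = [::] \/ head 0 s = e).
Proof.
case: s => [|y s] e1; first by split=> // _; split; [left | left].
rewrite alternates_from_cons alt1_cons /=.
by split=> [[-> ?] | [[_ ?] [//|<-]]]; split=> //; right.
Qed.

Definition lead_nz (s : seq int) : int := head 0 [seq x <- s | x != 0].

Lemma lead_nz_cons x t : lead_nz (x :: t) = if x == 0 then lead_nz t else x.
Proof. by rewrite /lead_nz /=; case: eqP. Qed.

Lemma lead_nz_eq0 s : (lead_nz s == 0) = all (fun x : int => x == 0) s.
Proof.
elim: s => [//|x t IH]; rewrite lead_nz_cons /=.
by case: ifP => [_ | ->] /=.
Qed.

Lemma filter_nz_nil s : ([seq x <- s | x != 0] == [::]) = (lead_nz s == 0).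
Proof.
rewrite lead_nz_eq0; elim: s => [//|x t IH] /=.
by case: ifP => [/negbTE -> | /negbFE ->].
Qed.

Lemma weak_alt1_nil : weak_alt1 [::].
Proof. by split=> //; left. Qed.

Lemma weak_alt1_cons x t : weak_alt1 (x :: t) <->
  weak_alt1 t /\ (x = 0 \/ (x = 1 \/ x = -1) /\ (lead_nz t = 0 \/ lead_nz t = - x)).
Proof.
have mem_cons P : (forall y, y \in x :: t -> P y) <-> P x /\ (forall y, y \in t -> P y).
  split=> [H | [Px H] y]; last by rewrite inE => /orP [/eqP -> | /H].
  by split=> [|y yt]; apply: H; rewrite inE ?eqxx ?yt ?orbT.
have mem_x : x \in [:: -1; 0; 1] <-> x = 0 \/ x = 1 \/ x = -1.
  by rewrite !inE; split=> [/or3P [] /eqP | [|[|]] ->]; rewrite ?eqxx //; tauto.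
rewrite /weak_alt1 mem_cons mem_x /=; case: eqP => [-> | x0] /=; first tauto.
have tail_nil : [seq y <- t | y != 0] = [::] <-> lead_nz t = 0.
  split=> [nil_t | /eqP]; last by rewrite -filter_nz_nil => /eqP.
  by apply/eqP; rewrite -filter_nz_nil nil_t.
have tail_alt (x1 : x = 1 \/ x = -1) :
    alternates_from (- x) [seq y <- t | y != 0] <->
    alt1 [seq y <- t | y != 0] /\ (lead_nz t = 0 \/ lead_nz t = - x).
  rewrite alternates_from_alt1 -?tail_nil //.
  by case: x1 => ->; rewrite ?opprK; [right | left].
rewrite alt1_cons; tauto.
Qed.

Lemma weak_alt1_drop n s : weak_alt1 s -> weak_alt1 (drop n s).
Proof. by elim: s n => [|x s IH] [|n] //= /weak_alt1_cons [/IH]. Qed.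

Lemma lead_nz_sign s : weak_alt1 s -> lead_nz s != 0 -> lead_nz s = 1 \/ lead_nz s = -1.
Proof.
elim: s => [//|x s IH] /weak_alt1_cons [ws [-> | [x1 _]]].
  by rewrite lead_nz_cons eqxx; exact: IH.
rewrite lead_nz_cons.
by have -> : (x == 0) = false by case: x1 => ->.
Qed.

Lemma suffix_ind (T : Type) (P : seq T -> Prop) (s : seq T) :
  P [::] -> (forall i, (i < size s)%N -> P (drop i.+1 s) -> P (drop i s)) -> P s.
Proof.
elim: s => [//|x s IH] P0 step; rewrite -[x :: s]drop0.
apply: (step 0%N) => //=; rewrite drop0; apply: IH => // i lt_i; exact: (step i.+1).
Qed.

Section WeightedSum.
Variable R : realDomainType.

Definition weighted_sum (b : nat -> R) (s : seq int) : R :=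
  \sum_(k < size s) b k * (nth 0 s k)%:~R.

Lemma weighted_sum_cons b x s :
  weighted_sum b (x :: s) = b 0%N * x%:~R + weighted_sum (b \o succn) s.
Proof. by rewrite /weighted_sum big_ord_recl. Qed.

Lemma weighted_sum_lead0 b s : lead_nz s = 0 -> weighted_sum b s = 0.
Proof.
move/eqP; rewrite lead_nz_eq0 => /(all_nthP 0) s0.
by rewrite /weighted_sum big1 // => k _; rewrite (eqP (s0 k _)) ?mulr0.
Qed.

Lemma weighted_sum_weak_alt1 b s : weak_alt1 s -> lead_nz s != 0 ->
  (forall k, (k < size s)%N -> 0 < b k) ->
  (forall k, (k.+1 < size s)%N -> b k.+1 < b k) ->
  0 < (lead_nz s)%:~R * weighted_sum b s <= b 0%N.
Proof.
elim: s b => [//|x s IH] b /weak_alt1_cons [ws xs] l0 b_gt0 b_decr.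
have IHb := IH (b \o succn) ws _ (fun k => b_gt0 k.+1) (fun k => b_decr k.+1).
have b1 (ls : lead_nz s != 0) : b 1%N < b 0%N by apply: b_decr; case: (s) ls.
have b0 := b_gt0 0%N erefl.
rewrite weighted_sum_cons lead_nz_cons in l0 *.
case: xs => [x0 | [x1 ls]].
  rewrite x0 eqxx in l0 *; rewrite mulr0 add0r.
  by have := b1 l0; have /andP[] := IHb l0; rewrite /=; lra.
have -> : (x == 0) = false by case: x1 => ->.
case: ls => [ls | ls].
  rewrite weighted_sum_lead0 // addr0.
  by case: x1 => ->; rewrite ?rmorphN1 ?rmorph1 /=; lra.
have ls0 : lead_nz s != 0 by rewrite ls; case: x1 => ->.
have := b1 ls0; have /andP[] := IHb ls0.
by rewrite ls /=; case: x1 => ->; rewrite ?opprK ?rmorphN1 ?rmorph1 /=; lra.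
Qed.

End WeightedSum.

Lemma intr_norm_le1 (R : realDomainType) (x : int) :
  `|x%:~R : R| <= 1 -> x = 0 \/ x = 1 \/ x = -1.
Proof. by rewrite -intr_norm lerz1; lia. Qed.

Lemma intr_add_norm_le1 (R : realDomainType) (x l : int) (S : R) : (l = 1 \/ l = -1) ->
  0 < l%:~R * S < 1 -> `|x%:~R + S| <= 1 -> x = 0 \/ x = - l.
Proof.
move=> l1 /andP[lS_gt0 lS_lt1] /ler_normlP[xS_ge xS_le].
have [lx_lt1 lx_gt] : (l * x)%:~R < 1 :> R /\ 0 < (l * x + 2)%:~R :> R.
  rewrite intrD intrM.
  case: l1 => -> in lS_gt0 lS_lt1 *;
    by rewrite ?rmorph1 ?rmorphN1 in lS_gt0 lS_lt1 *; split; lra.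
by move: lx_lt1 lx_gt; rewrite ltrz1 ltr0z; case: l1 => ->; lia.
Qed.

Section Reclusive.
Variables (R : realFieldType) (d : nat) (A : 'M[R]_d).
Hypothesis A_recl : reclusive A.

(* The entry of row i in column i + k; the default column i is never reached,
   since the lemmas below only use i + k < d. *)
Definition row_weight (i : 'I_d) (k : nat) : R := A i (nth i (enum 'I_d) (i + k)).

Lemma row_weight0 (i : 'I_d) : row_weight i 0%N = 1.
Proof. by rewrite /row_weight addn0 nth_ord_enum; case: A_recl => _ []. Qed.

Lemma row_weight_gt0_decr (i : 'I_d) k : (i + k.+1 < d)%N ->
  0 < row_weight i k.+1 < row_weight i k.
Proof.
rewrite /row_weight addnS => lt_ik; have lt_ik' := ltnW lt_ik.
case: A_recl => _ [_ /(_ i) decr].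
by have [] := decr (nth i (enum 'I_d) (i + k)) (nth i (enum 'I_d) (i + k).+1);
  rewrite ?nth_enum_ord ?leq_addr // => -> ->.
Qed.

Lemma row_weight_gt0 (i : 'I_d) k : (i + k < d)%N -> 0 < row_weight i k.
Proof.
by case: k => [_ | k /row_weight_gt0_decr /andP[]]; rewrite ?row_weight0.
Qed.

Lemma row_weight_decr (i : 'I_d) k : (i + k.+1 < d)%N -> row_weight i k.+1 < row_weight i k.
Proof. by case/row_weight_gt0_decr/andP. Qed.

Lemma mulmx_row_weighted_sum (c : 'cV[int]_d) (i : 'I_d) :
  (A *m map_mx (fun z : int => z%:~R) c) i 0 =
  weighted_sum (row_weight i) (drop i [seq c j 0 | j <- enum 'I_d]).
Proof.
set s := [seq c j 0 | j <- enum 'I_d].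
pose F j := A i (nth i (enum 'I_d) j) * (nth 0 s j)%:~R.
have -> : (A *m map_mx (fun z : int => z%:~R) c) i 0 = \sum_(0 <= j < d) F j.
  rewrite mxE big_mkord; apply: eq_bigr => j _.
  by rewrite mxE /F /s nth_ord_enum (nth_map i) ?size_enum_ord // nth_ord_enum.
rewrite (@big_cat_nat _ _ _ i) ?leq0n ?(ltnW (ltn_ord i)) //= big1_seq ?add0r; last first.
  move=> j /andP[_]; rewrite mem_iota add0n subn0 => /andP[_ lt_ji].
  have lt_jd := ltn_trans lt_ji (ltn_ord i).
  by rewrite /F; case: A_recl => -> //; rewrite ?mul0r ?nth_enum_ord.
rewrite -{1}[i : nat]add0n big_addn big_mkord /weighted_sum size_drop size_map size_enum_ord.
by apply: eq_bigr => k _; rewrite /F nth_drop addnC.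
Qed.

Variable c : 'cV[int]_d.
Local Notation s := [seq c j 0 | j <- enum 'I_d].
Local Notation Ac := (A *m map_mx (fun z : int => z%:~R) c).

Lemma size_drop_coords n : size (drop n s) = (d - n)%N.
Proof. by rewrite size_drop size_map size_enum_ord. Qed.

Lemma reclusive_row_norm_le1 (i : 'I_d) : weak_alt1 (drop i s) -> `|Ac i 0| <= 1.
Proof.
rewrite mulmx_row_weighted_sum => ws.
have [l0 | l0] := eqVneq (lead_nz (drop i s)) 0.
  by rewrite weighted_sum_lead0 // normr0 ler01.
have /andP[] := weighted_sum_weak_alt1 ws l0
  (fun k lt_k => @row_weight_gt0 i k ltac:(move: lt_k; rewrite size_drop_coords; lia))
  (fun k lt_k => @row_weight_decr i k ltac:(move: lt_k; rewrite size_drop_coords; lia)).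
rewrite row_weight0 ler_norml.
by case: (lead_nz_sign ws l0) => ->; rewrite ?rmorph1 ?rmorphN1; lra.
Qed.

Lemma reclusive_row_step (i : 'I_d) :
  `|Ac i 0| <= 1 -> weak_alt1 (drop i.+1 s) -> weak_alt1 (drop i s).
Proof.
move=> row_le1 ws; have lt_i : (i < size s)%N by rewrite size_map size_enum_ord.
rewrite (drop_nth 0 lt_i) weak_alt1_cons; split=> //.
move: row_le1; rewrite mulmx_row_weighted_sum (drop_nth 0 lt_i) weighted_sum_cons.
rewrite row_weight0 mul1r.
have [l0 | l0] := eqVneq (lead_nz (drop i.+1 s)) 0.
  by rewrite weighted_sum_lead0 // addr0 => /intr_norm_le1; tauto.
have /andP[lS_gt0 lS_le] := weighted_sum_weak_alt1 ws l0
  (fun k lt_k => @row_weight_gt0 i k.+1 ltac:(move: lt_k; rewrite size_drop_coords; lia))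
  (fun k lt_k => @row_weight_decr i k.+1 ltac:(move: lt_k; rewrite size_drop_coords; lia)).
have w1 : row_weight i 1%N < row_weight i 0%N.
  apply: row_weight_decr; move: l0; rewrite addn1.
  by case: ltnP => // le_d; rewrite drop_oversize // size_map size_enum_ord.
rewrite row_weight0 in w1.
have l1 := lead_nz_sign ws l0.
move/(intr_add_norm_le1 l1); rewrite lS_gt0 (le_lt_trans lS_le w1) => /(_ isT).
by case=> ->; [left | right; split; [case: l1 => ->; [right | left] | rewrite opprK; right]].
Qed.

End Reclusive.

Theorem mainTheorem18 (R : realFieldType) (d : nat) (A : 'M[R]_d) (c : 'cV[int]_d) :
  reclusive A ->
  (supnorm_le1 (A *m map_mx (fun z : int => z%:~R) c) <->
   weak_alt1 [seq c j 0 | j <- enum 'I_d]).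
Proof.
move=> A_recl; split=> [row_le1 | ws i].
  apply: suffix_ind => [|i lt_i]; first exact: weak_alt1_nil.
  move: lt_i; rewrite size_map size_enum_ord => lt_i.
  exact: (reclusive_row_step A_recl (row_le1 (Ordinal lt_i))).
exact/(reclusive_row_norm_le1 A_recl)/weak_alt1_drop.
Qed.
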